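(* Let $X=(X_1,\dots,X_p)\in\mathbb{R}^p$ satisfy $X\sim\mathcal{N}(0,\Sigma)$ with $\Sigma$ positive definite, and let $Y$ be a real random variable with $\mathbb{E}Y^2<\infty$, jointly distributed with $X$. Let $\beta^*=\arg\min_{w\in\mathbb{R}^p}\mathbb{E}[Y-X^\top w]^2=\Sigma^{-1}\mathbb{E}(XY)$, and for $j\in[p]$ let $\beta^{(j)}=\arg\min_{w\in\mathbb{R}^{p-1}}\mathbb{E}[Y-X_{-j}^\top w]^2$, where $X_{-j}\in\mathbb{R}^{p-1}$ is $X$ with its $j$-th coordinate removed and $\beta^*_{-j}\in\mathbb{R}^{p-1}$ is $\beta^*$ with its $j$-th entry removed. Define the population dropout and retraining variable importance estimates (with negative mean squared error as predictive skill, restricted to linear predictors) $$\widehat{\mathrm{VI}}^{(\mathrm{DR})}_j=\mathbb{E}[Y-X_{-j}^\top\beta^*_{-j}]^2-\mathbb{E}[Y-X^\top\beta^*]^2,\qquad \widehat{\mathrm{VI}}^{(\mathrm{RT})}_j=\mathbb{E}[Y-X_{-j}^\top\beta^{(j)}]^2-\mathbb{E}[Y-X^\top\beta^*]^2 .$$ Then $$\widehat{\mathrm{VI}}^{(\mathrm{DR})}_j-\widehat{\mathrm{VI}}^{(\mathrm{RT})}_j=\frac{\gamma_j^\top\Sigma_{(j)}^{-1}\gamma_j}{(\Sigma_{jj}-\gamma_j^\top\Sigma_{(j)}^{-1}\gamma_j)^2}\Big[\mathbb{E}(X_jY)-\gamma_j^\top\Sigma_{(j)}^{-1}\mathbb{E}(X_{-j}Y)\Big]^2,$$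 where $\gamma_j=\mathbb{E}(X_jX_{-j})\in\mathbb{R}^{p-1}$ and $\Sigma_{(j)}=\mathbb{E}(X_{-j}X_{-j}^\top)\in\mathbb{R}^{(p-1)\times(p-1)}$ is $\Sigma$ with its $j$-th row and column removed.
   Context: The dropout method predicts $Y$ from $X_{-j}$ by plugging the full linear model with $X_j$ replaced by its mean $0$, i.e. uses $X_{-j}^\top\beta^*_{-j}$; the retraining method refits a linear model on $X_{-j}$, i.e. uses $X_{-j}^\top\beta^{(j)}$. *)

From HB Require Import structures.
From mathcomp Require Import all_boot all_order all_algebra.
From mathcomp Require Import all_classical all_reals all_analysis.
Set Implicit Arguments. Unset Strict Implicit. Unset Printing Implicit Defensive.
Import Order.TTheory GRing.Theory Num.Theory.
Local Open Scope classical_set_scope.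
Local Open Scope ring_scope.

(* Real-valued expectation E[f] of a real function f on the probability space
   (the library expectation 'E_P[f] is extended-real; all expectations used
   below are finite under the hypotheses). *)
Definition Ex d (T : measurableType d) (R : realType) (P : probability T R)
  (f : T -> R) : R := fine ('E_P[f])%E.

Definition lincomb d (T : measurableType d) (R : realType) (m : nat)
  (X : 'I_m -> T -> R) (w : 'cV[R]_m) : T -> R :=
  fun t => \sum_(i < m) w i 0 * X i t.

Definition sqloss d (T : measurableType d) (R : realType) (P : probability T R)
  (m : nat) (X : 'I_m -> T -> R) (Y : T -> R) (w : 'cV[R]_m) : R :=
  Ex P (fun t => (Y t - lincomb X w t) ^+ 2).

Definition is_argmin_sqloss d (T : measurableType d) (R : realType)
  (P : probability T R) (m : nat) (X : 'I_m -> T -> R) (Y : T -> R)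
  (w : 'cV[R]_m) : Prop :=
  forall v : 'cV[R]_m, sqloss P X Y w <= sqloss P X Y v.

Definition posdef (R : realType) (m : nat) (M : 'M[R]_m) : Prop :=
  M^T = M /\ forall v : 'cV[R]_m, v != 0 -> 0 < (v^T *m M *m v) 0 0.

Definition second_moment d (T : measurableType d) (R : realType)
  (P : probability T R) (m : nat) (X : 'I_m -> T -> R) : 'M[R]_m :=
  \matrix_(i, k) Ex P (fun t => X i t * X k t).

(* X ~ N(0, Sigma) (Sigma positive definite), via Cramer–Wold:
   for every nonzero w, X^T w has law N(0, w^T Sigma w). *)
Definition centered_gaussian d (T : measurableType d) (R : realType)
  (P : probability T R) (m : nat) (X : 'I_m -> T -> R) (Sigma : 'M[R]_m) : Prop :=
  forall w : 'cV[R]_m, w != 0 ->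
    forall A : set R, measurable A ->
      P (lincomb X w @^-1` A) =
      normal_prob 0 (Num.sqrt ((w^T *m Sigma *m w) 0 0)) A.

Definition drop_rv d (T : measurableType d) (R : realType) (n : nat)
  (j : 'I_n.+1) (X : 'I_n.+1 -> T -> R) : 'I_n -> T -> R :=
  fun i => X (lift j i).

Definition drop_vec (R : realType) (n : nat) (j : 'I_n.+1) (w : 'cV[R]_n.+1)
  : 'cV[R]_n := \col_i w (lift j i) 0.

(* Only second moments enter.  The
   squared loss of w is E[Y^2] + w^T Sigma w - 2 w^T b with b = E[X Y], hence
   every minimiser solves the normal equations, and when w' is the refitted
   minimiser Sigma_(j)^-1 b_(-j), the losses of w and w' on X_(-j) differ by
   the Sigma_(j)-norm of w - w'.  The rows of Sigma beta = b other than j give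
   beta_(-j) - beta^(j) = - beta_j Sigma_(j)^-1 gamma_j, so that
   VI_DR - VI_RT = beta_j^2 gamma_j^T Sigma_(j)^-1 gamma_j, and row j gives
   (Sigma_jj - gamma_j^T Sigma_(j)^-1 gamma_j) beta_j
     = b_j - gamma_j^T Sigma_(j)^-1 b_(-j),
   where the Schur complement on the left is positive. *)

From HB Require Import structures.
From mathcomp Require Import all_boot all_order all_algebra.
From mathcomp Require Import all_classical all_reals all_analysis.
From mathcomp Require Import ring lra.
Set Implicit Arguments. Unset Strict Implicit. Unset Printing Implicit Defensive.
Import Order.TTheory GRing.Theory Num.Theory.
Local Open Scope classical_set_scope.
Local Open Scope ring_scope.

Section bilinear_forms.
Variables (R : comPzRingType) (m : nat).
Implicit Types (M : 'M[R]_m) (u v : 'cV[R]_m).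

Lemma dot_mxE u v : (u^T *m v) 0 0 = \sum_i u i 0 * v i 0.
Proof. by rewrite mxE; apply: eq_bigr => i _; rewrite mxE. Qed.

Lemma bilin_mxE M u v : (u^T *m M *m v) 0 0 = \sum_i \sum_k u i 0 * M i k * v k 0.
Proof.
rewrite mxE; under eq_bigr do rewrite mxE big_distrl /=.
rewrite exchange_big /=; apply: eq_bigr => i _; apply: eq_bigr => k _.
by rewrite !mxE.
Qed.

Lemma quad_formZ M a v : ((a *: v)^T *m M *m (a *: v)) 0 0 = a ^+ 2 * (v^T *m M *m v) 0 0.
Proof.
have -> : (a *: v)^T = a *: v^T by apply/matrixP => i k; rewrite !mxE.
by rewrite -scalemxAr -!scalemxAl ![(_ *: _ : 'M[R]_(1, 1)) 0 0]mxE mulrA -expr2.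
Qed.

Lemma sym_bilinC M u v : M^T = M -> (u^T *m M *m v) 0 0 = (v^T *m M *m u) 0 0.
Proof.
move=> sM; transitivity ((u^T *m M *m v)^T 0 0); first by rewrite [RHS]mxE.
by rewrite !trmx_mul trmxK sM mulmxA.
Qed.
End bilinear_forms.

Lemma quad_form_invmx (R : comUnitRingType) m (S : 'M[R]_m) (g : 'cV[R]_m) :
  S^T = S -> S \in unitmx ->
  ((invmx S *m g)^T *m S *m (invmx S *m g)) 0 0 = (g^T *m invmx S *m g) 0 0.
Proof. by move=> sS uS; rewrite trmx_mul trmx_inv sS -mulmxA mulKVmx. Qed.

Lemma posdef_unitmx (R : realType) m (S : 'M[R]_m) : posdef S -> S \in unitmx.
Proof.
case=> _ Spos; rewrite -row_free_unit -kermx_eq0; apply/rowV0P => v /sub_kermxP vS0.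
case: (eqVneq v 0) => // v_neq0.
by have := Spos v^T; rewrite trmx_eq0 trmxK vS0 mul0mx mxE ltxx => /(_ v_neq0).
Qed.

Lemma quadratic_ge0_lin_eq0 (R : realFieldType) (a c : R) :
  (forall t, 0 <= a * t + c * t ^+ 2) -> a = 0.
Proof.
move=> ge0; set e := `|c| + 1; set t := - a / e.
have e_gt0 : 0 < e by rewrite /e ltr_pwDr ?normr_ge0.
have aE : a = - (t * e) by rewrite /t divfK ?opprK // gt_eqF.
have ct : c * t ^+ 2 <= `|c| * t ^+ 2 by rewrite ler_wpM2r ?sqr_ge0 ?ler_norm.
have : t ^+ 2 <= 0 by have := ge0 t; rewrite aE /e; nra.
rewrite aE => t2_le0; suff -> : t = 0 by rewrite mul0r oppr0.
by apply/eqP; rewrite -sqrf_eq0 eq_le t2_le0 sqr_ge0.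
Qed.

Section least_squares_risk.
Variables (R : realFieldType) (m : nat).
Implicit Types (M : 'M[R]_m) (b u v w : 'cV[R]_m).

Definition lsq_risk M b w : R := (w^T *m M *m w) 0 0 - 2 * (w^T *m b) 0 0.

Lemma dot_self_eq0 u : (u^T *m u) 0 0 = 0 -> u = 0.
Proof.
move=> uu0; have sum0 : \sum_i u i 0 ^+ 2 = 0.
  by rewrite -[RHS]uu0 dot_mxE; apply: eq_bigr => i _; rewrite expr2.
apply/matrixP => i k; rewrite ord1 mxE; apply/eqP; rewrite -sqrf_eq0; apply/eqP.
by apply: (psumr_eq0P _ sum0) => // l _; exact: sqr_ge0.
Qed.

Lemma lsq_risk_shift M b w u t : M^T = M ->
  lsq_risk M b (w + t *: u) = lsq_risk M b w
    + 2 * t * (u^T *m (M *m w - b)) 0 0 + t ^+ 2 * (u^T *m M *m u) 0 0.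
Proof.
move=> sM; rewrite /lsq_risk.
have -> : (w + t *: u)^T = w^T + t *: u^T by apply/matrixP => i k; rewrite !mxE.
rewrite mulmxBr mulmxA !mulmxDl !mulmxDr -!scalemxAl -!scalemxAr.
rewrite ![(_ + _ : 'M[R]_(1, 1)) 0 0]mxE ![(- _ : 'M[R]_(1, 1)) 0 0]mxE.
rewrite ![(_ *: _ : 'M[R]_(1, 1)) 0 0]mxE (sym_bilinC w u sM); ring.
Qed.

Lemma lsq_risk_normal M b w : M^T = M ->
  (forall v, lsq_risk M b w <= lsq_risk M b v) -> M *m w = b.
Proof.
move=> sM wmin; apply/eqP; rewrite -subr_eq0; apply/eqP/dot_self_eq0.
set u := M *m w - b.
suff /eqP : 2 * (u^T *m u) 0 0 = 0 by rewrite mulf_eq0 pnatr_eq0 => /eqP.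
apply: (quadratic_ge0_lin_eq0 (c := (u^T *m M *m u) 0 0)) => t.
by have := wmin (w + t *: u); rewrite lsq_risk_shift // -/u; lra.
Qed.

Lemma lsq_risk_sub_normal M b w w' : M^T = M -> M *m w' = b ->
  lsq_risk M b w - lsq_risk M b w' = ((w - w')^T *m M *m (w - w')) 0 0.
Proof.
move=> sM w'b; rewrite -{1}(subrKC w' w) -[w - w']scale1r lsq_risk_shift //.
by rewrite w'b subrr mulmx0 mxE scale1r expr1n mul1r mulr0 addr0 addrAC subrr add0r.
Qed.
End least_squares_risk.

Section insert_coordinate.
Variables (R : nmodType) (n : nat) (j : 'I_n.+1).

Definition insert_cV (c : R) (u : 'cV[R]_n) : 'cV[R]_n.+1 :=
  \col_a (if unlift j a is Some i then u i 0 else c).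

Lemma insert_cV_id c u : insert_cV c u j 0 = c.
Proof. by rewrite mxE unlift_none. Qed.

Lemma insert_cV_lift c u i : insert_cV c u (lift j i) 0 = u i 0.
Proof. by rewrite mxE liftK. Qed.

Lemma insert_cV_eq0 c u : (insert_cV c u == 0) = (c == 0) && (u == 0).
Proof.
apply/eqP/andP => [v0 | [/eqP-> /eqP->]].
  split; first by rewrite -(insert_cV_id c u) v0 mxE.
  by apply/eqP/matrixP => i k; rewrite ord1 -(insert_cV_lift c) v0 !mxE.
by apply/matrixP => a k; rewrite ord1 !mxE; case: unlift => [i|]; rewrite ?mxE.
Qed.
End insert_coordinate.

Section principal_submatrix.
Variables (R : comPzRingType) (n : nat) (M : 'M[R]_n.+1) (j : 'I_n.+1).
Hypothesis sM : M^T = M.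

Local Notation Mj := (\matrix_(i, k) M (lift j i) (lift j k) : 'M[R]_n).
Local Notation gj := (\col_i M j (lift j i) : 'cV[R]_n).

Lemma sym_entryC a b : M a b = M b a.
Proof. by rewrite -{1}sM mxE. Qed.

Lemma sym_submx : Mj^T = Mj.
Proof. by apply/matrixP => i k; rewrite !mxE sym_entryC. Qed.

Lemma mulmx_insert_cV k (A : 'M[R]_(k, n.+1)) c u a :
  (A *m insert_cV j c u) a 0 = A a j * c + \sum_i A a (lift j i) * u i 0.
Proof.
rewrite mxE (bigD1_ord j) //= insert_cV_id.
by under eq_bigr do rewrite insert_cV_lift.
Qed.

Lemma quad_form_insert_cV (c : R) u :
  ((insert_cV j c u)^T *m M *m insert_cV j c u) 0 0 =
  c ^+ 2 * M j j + 2 * c * (gj^T *m u) 0 0 + (u^T *m Mj *m u) 0 0.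
Proof.
rewrite -mulmxA [LHS]dot_mxE (bigD1_ord j) //= insert_cV_id mulmx_insert_cV.
under eq_bigr do rewrite insert_cV_lift mulmx_insert_cV sym_entryC.
have -> : (gj^T *m u) 0 0 = \sum_i M j (lift j i) * u i 0.
  by rewrite dot_mxE; apply: eq_bigr => i _; rewrite !mxE.
have -> : (u^T *m Mj *m u) 0 0 = \sum_i u i 0 * \sum_k M (lift j i) (lift j k) * u k 0.
  rewrite bilin_mxE; apply: eq_bigr => i _; rewrite mulr_sumr.
  by apply: eq_bigr => k _; rewrite mxE mulrA.
under eq_bigr do rewrite mulrDr; rewrite big_split /=.
have -> : \sum_i u i 0 * (M j (lift j i) * c) = c * \sum_i M j (lift j i) * u i 0.
  by rewrite mulr_sumr; apply: eq_bigr => i _; ring.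
ring.
Qed.
End principal_submatrix.

Section posdef_principal_block.
Variables (R : realType) (n : nat) (M : 'M[R]_n.+1) (j : 'I_n.+1).
Hypothesis pM : posdef M.

Local Notation Mj := (\matrix_(i, k) M (lift j i) (lift j k) : 'M[R]_n).
Local Notation gj := (\col_i M j (lift j i) : 'cV[R]_n).
Local Notation q := ((gj^T *m invmx Mj *m gj) 0 0).

Lemma posdef_submx : posdef Mj.
Proof.
have [sM Mpos] := pM; split; first exact: sym_submx.
move=> u u_neq0; have := Mpos (insert_cV j 0 u).
rewrite insert_cV_eq0 (negbTE u_neq0) andbF quad_form_insert_cV // => /(_ isT).
by rewrite expr0n /= !mul0r mulr0 mul0r !add0r.
Qed.

Lemma schur_complement_gt0 : 0 < M j j - q.
Proof.
have [sM Mpos] := pM; have [sMj _] := posdef_submx.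
have uMj := posdef_unitmx posdef_submx.
have := Mpos (insert_cV j (-1) (invmx Mj *m gj)).
rewrite insert_cV_eq0 oppr_eq0 oner_eq0 => /(_ isT).
rewrite quad_form_insert_cV // quad_form_invmx // mulmxA.
by rewrite sqrrN expr1n; lra.
Qed.

Lemma mulmx_drop_vecE k (A : 'M[R]_(k, n.+1)) w a :
  (A *m w) a 0 = A a j * w j 0 + \sum_i A a (lift j i) * drop_vec j w i 0.
Proof.
by rewrite mxE (bigD1_ord j) //=; congr (_ + _); apply: eq_bigr => i _; rewrite mxE.
Qed.

Lemma normal_eq_blocks w b : M *m w = b ->
  M j j * w j 0 + (gj^T *m drop_vec j w) 0 0 = b j 0 /\
  Mj *m drop_vec j w + w j 0 *: gj = drop_vec j b.
Proof.
have [sM _] := pM; move=> <-; split.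
  by rewrite mulmx_drop_vecE dot_mxE; congr (_ + _); apply: eq_bigr => i _; rewrite !mxE.
apply/matrixP => i k; rewrite ord1 [RHS]mxE mulmx_drop_vecE mxE addrC; congr (_ + _).
  by rewrite !mxE [M j _](sym_entryC sM) mulrC.
by rewrite mxE; apply: eq_bigr => l _; rewrite mxE.
Qed.

Lemma lsq_risk_drop_sub_refit w b w' : M *m w = b -> Mj *m w' = drop_vec j b ->
  lsq_risk Mj (drop_vec j b) (drop_vec j w) - lsq_risk Mj (drop_vec j b) w' =
  q / (M j j - q) ^+ 2 * (b j 0 - (gj^T *m invmx Mj *m drop_vec j b) 0 0) ^+ 2.
Proof.
have [sMj _] := posdef_submx; have uMj := posdef_unitmx posdef_submx.
move=> wb w'b; have [row_j rows_j] := normal_eq_blocks wb.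
set x := w j 0 in row_j rows_j *.
have w'E : w' = invmx Mj *m drop_vec j b by rewrite -w'b mulKmx.
have dropE : drop_vec j w = w' - x *: (invmx Mj *m gj).
  by rewrite w'E -rows_j mulmxDr mulKmx // -scalemxAr addrK.
have xE : b j 0 - (gj^T *m invmx Mj *m drop_vec j b) 0 0 = (M j j - q) * x.
  rewrite -row_j dropE mulmxBr -scalemxAr w'E !mulmxA.
  rewrite ![(_ + _ : 'M[R]_(1, 1)) 0 0]mxE ![(- _ : 'M[R]_(1, 1)) 0 0]mxE.
  rewrite ![(_ *: _ : 'M[R]_(1, 1)) 0 0]mxE; ring.
rewrite lsq_risk_sub_normal // dropE addrAC subrr add0r -scaleNr quad_formZ.
rewrite quad_form_invmx // sqrrN xE.
have Mq_neq0 : M j j - q != 0 by rewrite gt_eqF ?schur_complement_gt0.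
by field.
Qed.
End posdef_principal_block.

Section second_moments.
Context d (T : measurableType d) (R : realType) (P : probability T R).

Lemma Lfun1_scale (f : T -> R) k : f \in Lfun P 1 -> (fun t => k * f t) \in Lfun P 1.
Proof. by rewrite -[fun t => _]/(k \*o f) mul_funC; exact: Lfun_scale. Qed.

Lemma Lfun1_lincomb (I : Type) (r : seq I) (c : I -> R) (F : I -> T -> R) :
  (forall i, F i \in Lfun P 1) -> (fun t => \sum_(i <- r) c i * F i t) \in Lfun P 1.
Proof. by move=> F1; rewrite -fct_sumE; apply: rpred_sum => i _; exact: Lfun1_scale. Qed.

Lemma expectation_lincomb (I : Type) (r : seq I) (c : I -> R) (F : I -> T -> R) :
  (forall i, F i \in Lfun P 1) ->
  'E_P[(fun t => \sum_(i <- r) c i * F i t)%R]%E = (\sum_(i <- r) c i * Ex P (F i))%:E.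
Proof.
move=> F1; elim: r => [|a r IH].
  by under eq_fun do rewrite big_nil; rewrite big_nil expectation_cst.
under eq_fun do rewrite big_cons.
rewrite expectationD ?Lfun1_scale ?Lfun1_lincomb // IH big_cons EFinD.
rewrite -[fun t => c a * _]/(c a \*o F a) mul_funC.
by rewrite expectationZl // /Ex EFinM fineK ?expectation_fin_num.
Qed.

Lemma ExD (f g : T -> R) : f \in Lfun P 1 -> g \in Lfun P 1 ->
  Ex P (fun t => f t + g t) = Ex P f + Ex P g.
Proof. by move=> f1 g1; rewrite /Ex expectationD // fineD ?expectation_fin_num. Qed.

Lemma Ex_lincomb (I : Type) (r : seq I) (c : I -> R) (F : I -> T -> R) :
  (forall i, F i \in Lfun P 1) ->
  Ex P (fun t => \sum_(i <- r) c i * F i t) = \sum_(i <- r) c i * Ex P (F i).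
Proof. by move=> F1; rewrite /Ex expectation_lincomb. Qed.

Lemma expectation_sqr_lty_Lfun2 (Y : {RV P >-> R}) :
  ('E_P[(fun t => Y t ^+ 2)%R] < +oo)%E -> (Y : T -> R) \in Lfun P 2%:E.
Proof.
move=> Y2; rewrite inE mfunP inE /= /finite_norm unlock /Lnorm poweR_lty //.
move: Y2; rewrite unlock; congr (integral _ _ _ < _)%E.
by apply: funext => t /=; rewrite powR_mulrn // real_normK // num_real.
Qed.

Definition cross_moment m (X : 'I_m -> T -> R) (Y : T -> R) : 'cV[R]_m :=
  \col_i Ex P (fun t => X i t * Y t).

Lemma second_moment_sym m (X : 'I_m -> T -> R) :
  (second_moment P X)^T = second_moment P X.
Proof.
apply/matrixP => i k; rewrite !mxE; congr (Ex P _).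
by apply: funext => t; exact: mulrC.
Qed.

Lemma sqlossE m (X : 'I_m -> T -> R) (Y : T -> R) w :
  (forall i, X i \in Lfun P 2%:E) -> Y \in Lfun P 2%:E ->
  sqloss P X Y w =
  Ex P (fun t => Y t ^+ 2) + lsq_risk (second_moment P X) (cross_moment X Y) w.
Proof.
move=> X2 Y2; set S := fun t => \sum_i w i 0 * X i t.
have XY1 i : (fun t => X i t * Y t) \in Lfun P 1 by exact: Lfun2_mul_Lfun1.
have XX1 i k : (fun t => X i t * X k t) \in Lfun P 1 by exact: Lfun2_mul_Lfun1.
have sqE : (fun t => (Y t - lincomb X w t) ^+ 2) = fun t => Y t ^+ 2
    + \sum_i (-2 * w i 0) * (X i t * Y t)
    + \sum_i w i 0 * \sum_k w k 0 * (X i t * X k t).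
  apply/funext => t; rewrite /lincomb -/(S t).
  have -> : \sum_i (-2 * w i 0) * (X i t * Y t) = -2 * (S t * Y t).
    by rewrite mulr_suml mulr_sumr; apply: eq_bigr => i _; ring.
  have -> : \sum_i w i 0 * \sum_k w k 0 * (X i t * X k t) = S t ^+ 2.
    rewrite expr2 mulr_suml; apply: eq_bigr => i _.
    by rewrite !mulr_sumr; apply: eq_bigr => k _; ring.
  ring.
have Y2_1 : (fun t => Y t ^+ 2) \in Lfun P 1 := Lfun2_mul_Lfun1 Y2 Y2.
have XXw1 i : (fun t => \sum_k w k 0 * (X i t * X k t)) \in Lfun P 1.
  exact: Lfun1_lincomb.
rewrite /sqloss sqE ExD ?(rpredD Y2_1) ?Lfun1_lincomb // ExD ?Lfun1_lincomb //.
rewrite !Ex_lincomb //; under [X in _ + X = _]eq_bigr do rewrite Ex_lincomb //.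
rewrite /lsq_risk bilin_mxE dot_mxE mulr_sumr -sumrN -addrA; congr (_ + _).
rewrite addrC; congr (_ + _).
  apply: eq_bigr => i _; rewrite mulr_sumr; apply: eq_bigr => k _.
  by rewrite mxE; ring.
by apply: eq_bigr => i _; rewrite mxE; ring.
Qed.

Lemma argmin_sqloss_normal m (X : 'I_m -> T -> R) (Y : T -> R) w :
  (forall i, X i \in Lfun P 2%:E) -> Y \in Lfun P 2%:E ->
  is_argmin_sqloss P X Y w -> second_moment P X *m w = cross_moment X Y.
Proof.
move=> X2 Y2 wmin; apply: lsq_risk_normal; first exact: second_moment_sym.
by move=> v; have := wmin v; rewrite !sqlossE // lerD2l.
Qed.

Lemma second_moment_drop_rv n (j : 'I_n.+1) (X : 'I_n.+1 -> T -> R) :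
  second_moment P (drop_rv j X) =
  \matrix_(i, k) second_moment P X (lift j i) (lift j k) :> 'M[R]_n.
Proof. by apply/matrixP => i k; rewrite !mxE. Qed.

Lemma cross_moment_drop_rv n (j : 'I_n.+1) (X : 'I_n.+1 -> T -> R) (Y : T -> R) :
  cross_moment (drop_rv j X) Y = drop_vec j (cross_moment X Y).
Proof. by apply/matrixP => i k; rewrite !mxE. Qed.
End second_moments.

Theorem proposition1 (R : realType) (d : measure_display) (T : measurableType d)
  (P : probability T R) (n : nat)
  (X : 'I_n.+1 -> {RV P >-> R}) (Y : {RV P >-> R})
  (hX2 : forall i, (X i : T -> R) \in Lfun P 2)
  (hY2 : ('E_P[(fun t => (Y t ^+ 2)%R)] < +oo)%E)
  (hgauss : centered_gaussian P (fun i => X i : T -> R) (second_moment P (fun i => X i : T -> R)))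
  (hpd : posdef (second_moment P (fun i => X i : T -> R)))
  (beta : 'cV[R]_n.+1) (j : 'I_n.+1) (betaj : 'cV[R]_n)
  (hbeta : is_argmin_sqloss P (fun i => X i : T -> R) Y beta)
  (hbetaj : is_argmin_sqloss P (drop_rv j (fun i => X i : T -> R)) Y betaj) :
  let XX := (fun i => X i : T -> R) in
  let Sigma := second_moment P XX in
  let Sigmaj : 'M[R]_n := \matrix_(i, k) Sigma (lift j i) (lift j k) in
  let gamma : 'cV[R]_n := \col_i Ex P (fun t => XX j t * XX (lift j i) t) in
  let EXY : 'cV[R]_n := \col_i Ex P (fun t => XX (lift j i) t * Y t) in
  let q := (gamma^T *m invmx Sigmaj *m gamma) 0 0 in
  let VI_DR := sqloss P (drop_rv j XX) Y (drop_vec j beta) - sqloss P XX Y beta in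
  let VI_RT := sqloss P (drop_rv j XX) Y betaj - sqloss P XX Y beta in
  VI_DR - VI_RT =
    q / (Sigma j j - q) ^+ 2 *
    (Ex P (fun t => XX j t * Y t) - (gamma^T *m invmx Sigmaj *m EXY) 0 0) ^+ 2.
Proof.
move=> XX Sigma Sigmaj gamma EXY q VI_DR VI_RT.
have hY := expectation_sqr_lty_Lfun2 hY2.
have hXj i : drop_rv j XX i \in Lfun P 2%:E by exact: hX2.
have normal := argmin_sqloss_normal hX2 hY hbeta.
have normalj := argmin_sqloss_normal hXj hY hbetaj.
rewrite second_moment_drop_rv cross_moment_drop_rv in normalj.
rewrite /q; have -> : gamma = \col_i Sigma j (lift j i).
  by apply/matrixP => i k; rewrite !mxE.
have -> : EXY = drop_vec j (cross_moment P XX Y) by apply/matrixP => i k; rewrite !mxE.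
have -> : Ex P (fun t => XX j t * Y t) = cross_moment P XX Y j 0 by rewrite mxE.
rewrite /VI_DR /VI_RT opprB addrA subrK !sqlossE // opprD addrACA subrr add0r.
rewrite second_moment_drop_rv cross_moment_drop_rv.
exact (lsq_risk_drop_sub_refit hpd normal normalj).
Qed.
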